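(* Let $L>0$ and let $\gamma\in C^\infty([0,L],\mathbb{R}^2)$ be an arclength-parameterized plane curve with $\gamma(0)=0$, and with signed curvature $\kappa$ satisfying $\kappa(s)\kappa_s(s)>0$ for all $s\in(0,L)$. Then $\gamma(s)\neq0$ for all $s\in(0,L)$, so that a polar tangential angle function $\omega:(0,L)\to\mathbb{R}$ is defined, and $\kappa(s)\omega_s(s)>0$ for all $s\in(0,L)$; in particular $\omega$ is strictly monotone.
   Context: $T=\gamma_s$, $N=R_{\pi/2}T$ with $R_\theta$ the counterclockwise rotation by angle $\theta$, and $\gamma_{ss}=\kappa N$. For a curve with $\gamma(s)\neq0$ for $s\in(0,L)$, set $X:=\gamma/|\gamma|$; a polar tangential angle function is a smooth $\omega:(0,L)\to\mathbb{R}$ with $R_{\omega(s)}X(s)=T(s)$ for all $s\in(0,L)$. *)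

From Stdlib Require Import Reals.
From Coquelicot Require Import Coquelicot.
Open Scope R_scope.

Definition smooth (f : R -> R) : Prop :=
  forall (n : nat) (t : R), ex_derive_n f n t.

Definition smooth_on_open (a b : R) (f : R -> R) : Prop :=
  forall (n : nat) (t : R), a < t < b -> ex_derive_n f n t.

(* Plane curve gamma = (gx, gy); T = gamma_s = (gx', gy').
   Arclength parameterization on [0,L]: |gamma_s| = 1. *)
Definition arclength_param (L : R) (gx gy : R -> R) : Prop :=
  forall s, 0 <= s <= L -> (Derive gx s) ^ 2 + (Derive gy s) ^ 2 = 1.

(* kappa is the signed curvature: gamma_ss = kappa N on [0,L],
   where N = R_{pi/2} T = (- gy', gx'). *)
Definition signed_curvature (L : R) (gx gy kappa : R -> R) : Prop :=
  forall s, 0 <= s <= L ->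
    Derive_n gx 2 s = kappa s * (- Derive gy s) /\
    Derive_n gy 2 s = kappa s * Derive gx s.

(* omega is a polar tangential angle function on (0,L):
   smooth on (0,L) and R_{omega(s)} X(s) = T(s), X = gamma/|gamma|. *)
Definition polar_tangential_angle (L : R) (gx gy omega : R -> R) : Prop :=
  smooth_on_open 0 L omega /\
  forall s, 0 < s < L ->
    let r := sqrt (gx s ^ 2 + gy s ^ 2) in
    let X1 := gx s / r in
    let X2 := gy s / r in
    cos (omega s) * X1 - sin (omega s) * X2 = Derive gx s /\
    sin (omega s) * X1 + cos (omega s) * X2 = Derive gy s.

Definition strictly_monotone_on_open (a b : R) (f : R -> R) : Prop :=
  (forall u v, a < u < b -> a < v < b -> u < v -> f u < f v) \/
  (forall u v, a < u < b -> a < v < b -> u < v -> f u > f v).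

From Stdlib Require Import Reals Lra Lia Psatz.
From Coquelicot Require Import Coquelicot.
Open Scope R_scope.

(* Let rho = |gamma|^2 and P = gamma x T.  The Frenet equations give
   (kappa rho - 2 P)_s = kappa_s rho, and kappa has a constant sign on (0, L)
   since kappa kappa_s > 0 there.  Hence kappa (kappa rho - 2 P) is
   nondecreasing and vanishes at s = 0; if gamma(s) = 0, it would vanish on all
   of [0, s], forcing rho = 0 on (0, s), which contradicts |gamma_s| = 1.
   Since cos omega = X.T and sin omega = X x T, differentiating yields
   omega_s = kappa - P / rho, so 2 rho kappa omega_s = kappa (kappa rho - 2 P)
   + kappa^2 rho > 0.  A polar tangential angle is obtained by integrating
   kappa - P / rho from a suitable initial angle. *)

(* [auto_derive] leaves [Derive (fun x => f x)], which [ring] does not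
   identify with [Derive f]. *)
Ltac eta_Derive :=
  repeat match goal with
  | |- context [Derive (fun x => ?f x)] => change (Derive (fun x => f x)) with (Derive f)
  end.

Lemma locally_open_interval (a b t : R) : a < t < b -> locally t (fun y => a < y < b).
Proof.
  intros [Hat Htb].
  exact (locally_interval _ t a b Hat Htb (fun y H1 H2 => conj H1 H2)).
Qed.

Lemma Rmult_pos_chain (a b c : R) : 0 < a * b -> 0 < b * c -> 0 < a * c.
Proof. intros; nra. Qed.

Lemma Derive_n_S (f : R -> R) (n : nat) (x : R) :
  Derive_n f (S n) x = Derive_n (Derive f) n x.
Proof.
  rewrite <- Nat.add_1_r, <- Derive_n_comp.
  apply Derive_n_ext. reflexivity.
Qed.

Lemma smooth_Derive (f : R -> R) : smooth f -> smooth (Derive f).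
Proof.
  intros Hf [|n] t; [exact I|].
  apply (ex_derive_ext (Derive_n f (S n))); [intros; apply Derive_n_S|].
  exact (Hf (S (S n)) t).
Qed.

Lemma ex_derive_smooth (f : R -> R) (t : R) : smooth f -> ex_derive f t.
Proof. intros Hf. exact (Hf 1%nat t). Qed.

#[local] Hint Resolve smooth_Derive ex_derive_smooth : core.

(** * Smoothness on an open interval *)

Definition ex_derive_upto (a b : R) (n : nat) (f : R -> R) : Prop :=
  forall k t, (k <= n)%nat -> a < t < b -> ex_derive_n f k t.

Section DeriveUpto.

Variables a b : R.

Lemma ex_derive_upto_0 (f : R -> R) : ex_derive_upto a b 0 f.
Proof. intros k t Hk _. replace k with 0%nat by lia. exact I. Qed.

Lemma ex_derive_upto_S (n : nat) (f : R -> R) :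
  ex_derive_upto a b (S n) f <->
  (forall t, a < t < b -> ex_derive f t) /\ ex_derive_upto a b n (Derive f).
Proof.
  split.
  - intros Hf. split.
    + intros t Ht. exact (Hf 1%nat t ltac:(lia) Ht).
    + intros [|k] t Hk Ht; [exact I|].
      apply (ex_derive_ext (Derive_n f (S k))); [intros; apply Derive_n_S|].
      exact (Hf (S (S k)) t ltac:(lia) Ht).
  - intros [Hf1 Hf] [|[|k]] t Hk Ht; [exact I | exact (Hf1 t Ht)|].
    apply (ex_derive_ext (Derive_n (Derive f) k)); [intros; symmetry; apply Derive_n_S|].
    exact (Hf (S k) t ltac:(lia) Ht).
Qed.

Lemma ex_derive_upto_pred (n : nat) (f : R -> R) :
  ex_derive_upto a b (S n) f -> ex_derive_upto a b n f.
Proof. intros Hf k t Hk. apply Hf. lia. Qed.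

Lemma ex_derive_upto_ext (n : nat) (f g : R -> R) :
  (forall t, a < t < b -> f t = g t) -> ex_derive_upto a b n f -> ex_derive_upto a b n g.
Proof.
  intros Hfg Hf k t Hk Ht. apply (ex_derive_n_ext_loc f).
  - exact (filter_imp _ _ Hfg (locally_open_interval a b t Ht)).
  - exact (Hf k t Hk Ht).
Qed.

Lemma ex_derive_upto_of_smooth (f : R -> R) (k n : nat) :
  smooth f -> ex_derive_upto a b n (Derive_n f k).
Proof.
  intros Hf [|j] t _ _; [exact I|].
  apply (ex_derive_ext (Derive_n f (j + k))); [intros; symmetry; apply Derive_n_comp|].
  exact (Hf (S (j + k)) t).
Qed.

Lemma locally_ex_derive_upto (n : nat) (f : R -> R) (t : R) :
  ex_derive_upto a b n f -> a < t < b ->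
  locally t (fun y => forall k, (k <= n)%nat -> ex_derive_n f k y).
Proof.
  intros Hf Ht. apply (filter_imp (fun y => a < y < b)).
  - intros y Hy k Hk. exact (Hf k y Hk Hy).
  - exact (locally_open_interval a b t Ht).
Qed.

Lemma ex_derive_upto_plus (n : nat) (f g : R -> R) :
  ex_derive_upto a b n f -> ex_derive_upto a b n g ->
  ex_derive_upto a b n (fun x => f x + g x).
Proof.
  intros Hf Hg k t Hk Ht.
  apply ex_derive_n_plus; apply (locally_ex_derive_upto k);
    [intros j s Hj; apply Hf; lia | exact Ht | intros j s Hj; apply Hg; lia | exact Ht].
Qed.

Lemma ex_derive_upto_minus (n : nat) (f g : R -> R) :
  ex_derive_upto a b n f -> ex_derive_upto a b n g ->
  ex_derive_upto a b n (fun x => f x - g x).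
Proof.
  intros Hf Hg k t Hk Ht.
  apply ex_derive_n_minus; apply (locally_ex_derive_upto k);
    [intros j s Hj; apply Hf; lia | exact Ht | intros j s Hj; apply Hg; lia | exact Ht].
Qed.

Lemma ex_derive_upto_opp (n : nat) (f : R -> R) :
  ex_derive_upto a b n f -> ex_derive_upto a b n (fun x => - f x).
Proof. intros Hf k t Hk Ht. apply ex_derive_n_opp, Hf; assumption. Qed.

Lemma ex_derive_upto_mult (n : nat) :
  forall f g : R -> R, ex_derive_upto a b n f -> ex_derive_upto a b n g ->
  ex_derive_upto a b n (fun x => f x * g x).
Proof.
  induction n as [|n IH]; intros f g Hf Hg; [apply ex_derive_upto_0|].
  pose proof (proj1 (ex_derive_upto_S n f) Hf) as [Hf1 Hf'].
  pose proof (proj1 (ex_derive_upto_S n g) Hg) as [Hg1 Hg'].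
  apply ex_derive_upto_S. split.
  - intros t Ht. apply ex_derive_mult; auto.
  - apply (ex_derive_upto_ext n (fun x => Derive f x * g x + f x * Derive g x)).
    + intros t Ht. symmetry. apply Derive_mult; auto.
    + apply ex_derive_upto_plus; apply IH; auto using ex_derive_upto_pred.
Qed.

Lemma ex_derive_upto_inv (f : R -> R) :
  (forall n, ex_derive_upto a b n f) -> (forall t, a < t < b -> f t <> 0) ->
  forall n, ex_derive_upto a b n (fun x => / f x).
Proof.
  intros Hf Hf0 n. induction n as [|n IH]; [apply ex_derive_upto_0|].
  pose proof (proj1 (ex_derive_upto_S n f) (Hf (S n))) as [Hf1 Hf'].
  apply ex_derive_upto_S. split.
  - intros t Ht. apply ex_derive_inv; auto.
  - apply (ex_derive_upto_ext n (fun x => - (Derive f x * (/ f x * / f x)))).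
    + intros t Ht. rewrite Derive_inv by auto. field. auto.
    + apply ex_derive_upto_opp, ex_derive_upto_mult, ex_derive_upto_mult; assumption.
Qed.

Lemma smooth_on_open_upto (f : R -> R) :
  smooth_on_open a b f <-> forall n, ex_derive_upto a b n f.
Proof.
  split.
  - intros Hf n k t _ Ht. exact (Hf k t Ht).
  - intros Hf n t Ht. exact (Hf n n t (Nat.le_refl n) Ht).
Qed.

Lemma smooth_on_open_of_is_derive (f df : R -> R) :
  (forall t, a < t < b -> is_derive f t (df t)) -> smooth_on_open a b df ->
  smooth_on_open a b f.
Proof.
  rewrite !smooth_on_open_upto. intros Hd Hdf [|n]; [apply ex_derive_upto_0|].
  apply ex_derive_upto_S. split.
  - intros t Ht. exists (df t). auto.
  - apply (ex_derive_upto_ext n df); [|apply Hdf].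
    intros t Ht. symmetry. apply is_derive_unique. auto.
Qed.

End DeriveUpto.

Lemma same_sign_of_nonvanishing (f : R -> R) (a b : R) :
  continuity f -> (forall t, a < t < b -> f t <> 0) ->
  forall s t, a < s < b -> a < t < b -> 0 < f s * f t.
Proof.
  intros Hc Hf0 s t Hs Ht.
  destruct (Rlt_or_le 0 (f s * f t)) as [|Hle]; [assumption|exfalso].
  pose proof (Hf0 s Hs). pose proof (Hf0 t Ht).
  destruct (IVT_gen f s t 0 Hc) as [c [Hc_in Hfc]].
  - unfold Rmin, Rmax; destruct Rle_dec; split; nra.
  - apply (Hf0 c); [|exact Hfc].
    unfold Rmin, Rmax in Hc_in; destruct Rle_dec; lra.
Qed.

Lemma nondecreasing_of_derive_nonneg (f df : R -> R) (a b : R) :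
  (forall t, a <= t <= b -> is_derive f t (df t)) -> (forall t, a <= t <= b -> 0 <= df t) ->
  forall u v, a <= u -> u <= v -> v <= b -> f u <= f v.
Proof.
  intros Hd Hpos u v Hu Huv Hv.
  destruct (Rle_lt_or_eq_dec _ _ Huv) as [Hlt|<-]; [|lra].
  destruct (MVT_gen f u v df) as [c [Hc Hfc]].
  - intros x Hx. rewrite Rmin_left, Rmax_right in Hx by lra. apply Hd. lra.
  - intros x Hx. rewrite Rmin_left, Rmax_right in Hx by lra.
    apply continuity_pt_filterlim, (ex_derive_continuous f x). exists (df x). apply Hd. lra.
  - rewrite Rmin_left, Rmax_right in Hc by lra.
    specialize (Hpos c ltac:(lra)). nra.
Qed.

Lemma derive_eq_0_of_nondecreasing_flat (f df : R -> R) (a b : R) :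
  (forall t, a <= t <= b -> is_derive f t (df t)) -> (forall t, a <= t <= b -> 0 <= df t) ->
  f a = f b -> forall t, a < t < b -> df t = 0.
Proof.
  intros Hd Hpos Hab t Ht.
  assert (Hflat : forall s, a <= s <= b -> f s = f a).
  { intros s Hs.
    pose proof (nondecreasing_of_derive_nonneg f df a b Hd Hpos a s).
    pose proof (nondecreasing_of_derive_nonneg f df a b Hd Hpos s b). lra. }
  assert (Hd0 : is_derive f t 0).
  { apply (is_derive_ext_loc (fun _ => f a)); [|exact (is_derive_const (f a) t)].
    apply (filter_imp (fun s => a < s < b)); [|exact (locally_open_interval a b t Ht)].
    intros s Hs. symmetry. apply Hflat. lra. }
  rewrite <- (is_derive_unique f t (df t)) by (apply Hd; lra).
  exact (is_derive_unique f t 0 Hd0).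
Qed.

Lemma constant_of_derive_0 (f : R -> R) (a b : R) :
  (forall t, a < t < b -> is_derive f t 0) -> forall s t, a < s < b -> a < t < b -> f s = f t.
Proof.
  intros Hd s t Hs Ht.
  destruct (Rtotal_order s t) as [Hlt|[->|Hlt]]; [| reflexivity | symmetry];
    apply eq_is_derive; try assumption; intros x Hx; apply Hd; lra.
Qed.

Lemma strictly_monotone_of_derive_sign (f : R -> R) (a b c : R) :
  c <> 0 -> (forall t, a < t < b -> ex_derive f t) ->
  (forall t, a < t < b -> 0 < c * Derive f t) -> strictly_monotone_on_open a b f.
Proof.
  intros Hc Hd Hsign. destruct (Rdichotomy _ _ Hc) as [Hneg|Hpos].
  - right. intros u v Hu Hv Huv.
    enough (- f u < - f v) by lra.
    apply (incr_function (fun x => - f x) a b (fun x => - Derive f x)); simpl; try lra.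
    + intros x H1 H2. apply (is_derive_opp f), Derive_correct, Hd. lra.
    + intros x H1 H2. specialize (Hsign x (conj H1 H2)). nra.
  - left. intros u v Hu Hv Huv.
    apply (incr_function f a b (Derive f)); simpl; try lra.
    + intros x H1 H2. apply Derive_correct, Hd. lra.
    + intros x H1 H2. specialize (Hsign x (conj H1 H2)). nra.
Qed.

Lemma rotation_unit_iff (c s x1 x2 p q : R) : x1 ^ 2 + x2 ^ 2 = 1 ->
  (c * x1 - s * x2 = p /\ s * x1 + c * x2 = q) <-> (c = x1 * p + x2 * q /\ s = x1 * q - x2 * p).
Proof.
  intros Hx. split; intros [Hp Hq]; subst; split.
  - transitivity (c * (x1 ^ 2 + x2 ^ 2)); [rewrite Hx|]; ring.
  - transitivity (s * (x1 ^ 2 + x2 ^ 2)); [rewrite Hx|]; ring.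
  - transitivity (p * (x1 ^ 2 + x2 ^ 2)); [|rewrite Hx]; ring.
  - transitivity (q * (x1 ^ 2 + x2 ^ 2)); [|rewrite Hx]; ring.
Qed.

Lemma cos_sin_surjective (p q : R) : p ^ 2 + q ^ 2 = 1 -> exists c, cos c = p /\ sin c = q.
Proof.
  intros H. assert (Hp : -1 <= p <= 1) by (split; nra).
  assert (Hs : sqrt (1 - p²) = Rabs q).
  { rewrite <- sqrt_Rsqr_abs. f_equal. unfold Rsqr. lra. }
  destruct (Rle_dec 0 q) as [Hq|Hq].
  - exists (acos p). rewrite cos_acos, sin_acos by assumption.
    rewrite Hs, Rabs_right by lra. auto.
  - exists (- acos p). rewrite cos_neg, sin_neg, cos_acos, sin_acos by assumption.
    rewrite Hs, Rabs_left by lra. split; [reflexivity | ring].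
Qed.

(** * Lifting a unit vector field to an angle *)

Section AngleLift.

Variables (a b : R) (u v h : R -> R).
Hypothesis unit_uv : forall t, a < t < b -> u t ^ 2 + v t ^ 2 = 1.
Hypothesis is_derive_u : forall t, a < t < b -> is_derive u t (- h t * v t).
Hypothesis is_derive_v : forall t, a < t < b -> is_derive v t (h t * u t).

Lemma Derive_angle (w : R -> R) (t : R) :
  a < t < b -> ex_derive w t ->
  (forall s, a < s < b -> cos (w s) = u s /\ sin (w s) = v s) -> Derive w t = h t.
Proof.
  intros Ht Hw Hcs. set (d := Derive w t).
  assert (Hloc : locally t (fun s => cos (w s) = u s /\ sin (w s) = v s)).
  { exact (filter_imp _ _ Hcs (locally_open_interval a b t Ht)). }
  assert (Hcos : - sin (w t) * d = - h t * v t).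
  { rewrite <- (is_derive_unique u t _ (is_derive_u t Ht)).
    symmetry. apply is_derive_unique, (is_derive_ext_loc (fun s => cos (w s))).
    - apply (filter_imp _ _ (fun s (Hs : _ /\ _) => proj1 Hs) Hloc).
    - auto_derive; [exact Hw|]. eta_Derive. unfold d. ring. }
  assert (Hsin : cos (w t) * d = h t * u t).
  { rewrite <- (is_derive_unique v t _ (is_derive_v t Ht)).
    symmetry. apply is_derive_unique, (is_derive_ext_loc (fun s => sin (w s))).
    - apply (filter_imp _ _ (fun s (Hs : _ /\ _) => proj2 Hs) Hloc).
    - auto_derive; [exact Hw|]. eta_Derive. unfold d. ring. }
  destruct (Hcs t Ht) as [Hc Hs]. rewrite <- Hc in Hsin. rewrite <- Hs in Hcos.
  assert (Hkey : d - h t = sin (w t) * (sin (w t) * d - h t * sin (w t))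
                         + cos (w t) * (cos (w t) * d - h t * cos (w t))).
  { pose proof (sin2_cos2 (w t)) as Hpyth. unfold Rsqr in Hpyth.
    transitivity ((d - h t) * (sin (w t) * sin (w t) + cos (w t) * cos (w t)));
      [rewrite Hpyth|]; ring. }
  rewrite Hsin in Hkey. replace (sin (w t) * d) with (h t * sin (w t)) in Hkey by lra.
  lra.
Qed.

Lemma angle_lift_exists :
  a < b -> (forall t, a < t < b -> continuous h t) ->
  exists w, (forall t, a < t < b -> is_derive w t (h t)) /\
            (forall t, a < t < b -> cos (w t) = u t /\ sin (w t) = v t).
Proof.
  intros Hab Hh. set (m := (a + b) / 2). assert (Hm : a < m < b) by (unfold m; lra).
  destruct (cos_sin_surjective (u m) (v m) (unit_uv m Hm)) as [c0 [Hc0 Hs0]].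
  set (w := fun t => c0 + RInt h m t).
  assert (Hw : forall t, a < t < b -> is_derive w t (h t)).
  { intros t Ht.
    assert (HI : is_derive (RInt h m) t (h t)).
    { apply (is_derive_RInt h (RInt h m) m t); [|exact (Hh t Ht)].
      apply (filter_imp (fun s => a < s < b)); [|exact (locally_open_interval a b t Ht)].
      intros s Hs. apply (RInt_correct (V := R_CompleteNormedModule)).
      apply (ex_RInt_continuous (V := R_CompleteNormedModule)).
      intros z Hz. apply Hh. unfold Rmin, Rmax in Hz. destruct Rle_dec; lra. }
    pose proof (is_derive_plus (fun _ => c0) (RInt h m) t zero (h t)
                  (is_derive_const c0 t) HI) as Hsum.
    rewrite plus_zero_l in Hsum. exact Hsum. }
  exists w. split; [exact Hw|].
  (* [D] pairs the unit vectors (cos w, sin w) and (u, v); it is constant, equal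
     to 1 at [m], so the two vectors coincide. *)
  set (D := fun t => cos (w t) * u t + sin (w t) * v t).
  assert (HD : forall t, a < t < b -> is_derive D t 0).
  { intros t Ht.
    pose proof (Hw t Ht) as Hw'.
    pose proof (is_derive_u t Ht) as Hu'. pose proof (is_derive_v t Ht) as Hv'.
    unfold D. auto_derive; [repeat split; eexists; eassumption|]. eta_Derive.
    rewrite (is_derive_unique w t _ Hw'), (is_derive_unique u t _ Hu'),
      (is_derive_unique v t _ Hv').
    ring. }
  assert (Hw_m : w m = c0) by (unfold w; rewrite RInt_point; apply Rplus_0_r).
  intros t Ht.
  assert (HD1 : D t = 1).
  { rewrite (constant_of_derive_0 D a b HD t m Ht Hm). unfold D.
    rewrite Hw_m, Hc0, Hs0, <- (unit_uv m Hm). ring. }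
  unfold D in HD1. pose proof (unit_uv t Ht). pose proof (sin2_cos2 (w t)) as Hpyth.
  unfold Rsqr in Hpyth.
  assert (Hsq : (cos (w t) - u t)² + (sin (w t) - v t)² = 0) by (unfold Rsqr; nra).
  apply Rplus_sqr_eq_0 in Hsq as [Hc Hs].
  split; apply Rminus_diag_uniq; assumption.
Qed.

End AngleLift.

(** * Plane curves with monotone curvature starting at the origin *)

Section PlaneCurve.

Variables (L : R) (gx gy kappa : R -> R).
Hypotheses (smooth_gx : smooth gx) (smooth_gy : smooth gy).
Hypothesis unit_speed : arclength_param L gx gy.
Hypothesis frenet_kappa : signed_curvature L gx gy kappa.
Hypotheses (gx_0 : gx 0 = 0) (gy_0 : gy 0 = 0).
Hypothesis kappa_kappa_s_pos : forall s, 0 < s < L -> kappa s * Derive kappa s > 0.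

Definition sqnorm (t : R) : R := gx t ^ 2 + gy t ^ 2.
Definition cross (t : R) : R := gx t * Derive gy t - gy t * Derive gx t.
Definition dot (t : R) : R := gx t * Derive gx t + gy t * Derive gy t.
(* Unlike [kappa], which is only constrained on [0, L], [curvature] is smooth
   on all of R; the two agree on [0, L]. *)
Definition curvature (t : R) : R :=
  Derive gx t * Derive (Derive gy) t - Derive gy t * Derive (Derive gx) t.
Definition defect (t : R) : R := curvature t * sqnorm t - 2 * cross t.
Definition cos_polar (t : R) : R := dot t / sqrt (sqnorm t).
Definition sin_polar (t : R) : R := cross t / sqrt (sqnorm t).
Definition polar_rate (t : R) : R := curvature t - cross t / sqnorm t.

Lemma curvature_eq_kappa s : 0 <= s <= L -> curvature s = kappa s.
Proof.
  intros Hs. destruct (frenet_kappa s Hs) as [Hx2 Hy2].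
  change (Derive_n gx 2 s) with (Derive (Derive gx) s) in Hx2.
  change (Derive_n gy 2 s) with (Derive (Derive gy) s) in Hy2.
  unfold curvature. rewrite Hx2, Hy2.
  transitivity (kappa s * (Derive gx s ^ 2 + Derive gy s ^ 2)); [ring|].
  rewrite (unit_speed s Hs). ring.
Qed.

Lemma frenet s : 0 <= s <= L ->
  Derive (Derive gx) s = - curvature s * Derive gy s /\
  Derive (Derive gy) s = curvature s * Derive gx s.
Proof.
  intros Hs. rewrite curvature_eq_kappa by exact Hs.
  destruct (frenet_kappa s Hs) as [Hx2 Hy2]. split.
  - change (Derive (Derive gx) s) with (Derive_n gx 2 s). rewrite Hx2. ring.
  - exact Hy2.
Qed.

Lemma ex_derive_curvature t : ex_derive curvature t.
Proof. unfold curvature. auto_derive. repeat split; auto. Qed.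

Lemma Derive_curvature t : 0 < t < L -> Derive curvature t = Derive kappa t.
Proof.
  intros Ht. apply Derive_ext_loc.
  apply (filter_imp (fun s => 0 < s < L)); [|exact (locally_open_interval 0 L t Ht)].
  intros s Hs. apply curvature_eq_kappa. lra.
Qed.

Lemma sqnorm_nonneg t : 0 <= sqnorm t.
Proof. unfold sqnorm. nra. Qed.

Lemma lagrange_identity t : 0 <= t <= L -> dot t ^ 2 + cross t ^ 2 = sqnorm t.
Proof.
  intros Ht. transitivity (sqnorm t * (Derive gx t ^ 2 + Derive gy t ^ 2)).
  - unfold dot, cross, sqnorm. ring.
  - rewrite (unit_speed t Ht). ring.
Qed.

Lemma is_derive_sqnorm t : is_derive sqnorm t (2 * dot t).
Proof. unfold sqnorm, dot. auto_derive; [repeat split; auto|]. eta_Derive. ring. Qed.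

Lemma is_derive_cross t : 0 <= t <= L -> is_derive cross t (curvature t * dot t).
Proof.
  intros Ht. destruct (frenet t Ht) as [Hx2 Hy2].
  unfold cross. auto_derive; [repeat split; auto|]. eta_Derive.
  rewrite Hx2, Hy2. unfold dot. ring.
Qed.

Lemma is_derive_dot t : 0 <= t <= L -> is_derive dot t (1 - curvature t * cross t).
Proof.
  intros Ht. destruct (frenet t Ht) as [Hx2 Hy2].
  unfold dot. auto_derive; [repeat split; auto|]. eta_Derive.
  rewrite Hx2, Hy2.
  transitivity (Derive gx t ^ 2 + Derive gy t ^ 2 - curvature t * cross t).
  - unfold cross. ring.
  - rewrite (unit_speed t Ht). reflexivity.
Qed.

Lemma is_derive_defect t : 0 <= t <= L -> is_derive defect t (Derive curvature t * sqnorm t).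
Proof.
  intros Ht.
  pose proof (Derive_correct _ _ (ex_derive_curvature t)) as Hk.
  pose proof (is_derive_sqnorm t) as Hr. pose proof (is_derive_cross t Ht) as Hp.
  unfold defect. auto_derive; [repeat split; eexists; eassumption|]. eta_Derive.
  rewrite (is_derive_unique _ _ _ Hr), (is_derive_unique _ _ _ Hp). ring.
Qed.

Lemma kappa_same_sign s t : 0 < s < L -> 0 < t < L -> 0 < kappa s * kappa t.
Proof.
  intros Hs Ht. rewrite <- !curvature_eq_kappa by lra.
  apply (same_sign_of_nonvanishing curvature 0 L); [| |exact Hs|exact Ht].
  - intros x. apply continuity_pt_filterlim, (ex_derive_continuous curvature x).
    apply ex_derive_curvature.
  - intros x Hx Hzero. rewrite curvature_eq_kappa in Hzero by lra.
    pose proof (kappa_kappa_s_pos x Hx) as Hk. rewrite Hzero in Hk. lra.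
Qed.

Lemma kappa_defect_derive_nonneg s t : 0 < s < L -> 0 <= t <= s ->
  0 <= kappa s * (Derive curvature t * sqnorm t).
Proof.
  intros Hs Ht. destruct (Req_dec t 0) as [->|Ht0].
  - replace (sqnorm 0) with 0 by (unfold sqnorm; rewrite gx_0, gy_0; ring). lra.
  - rewrite Derive_curvature by lra.
    pose proof (Rmult_pos_chain _ _ _ (kappa_same_sign s t Hs ltac:(lra))
                  (kappa_kappa_s_pos t ltac:(lra))).
    pose proof (sqnorm_nonneg t). nra.
Qed.

Lemma kappa_defect_nonneg s : 0 < s < L -> 0 <= kappa s * defect s.
Proof.
  intros Hs.
  replace 0 with (kappa s * defect 0) by (unfold defect, sqnorm, cross; rewrite gx_0, gy_0; ring).
  apply (nondecreasing_of_derive_nonneg (fun t => kappa s * defect t)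
           (fun t => kappa s * (Derive curvature t * sqnorm t)) 0 s); try lra.
  - intros t Ht. apply is_derive_scal, is_derive_defect. lra.
  - intros t Ht. apply kappa_defect_derive_nonneg; assumption.
Qed.

Lemma sqnorm_not_flat s : 0 < s <= L -> ~ (forall t, 0 < t < s -> sqnorm t = 0).
Proof.
  intros Hs Hflat.
  assert (Hloc : locally (s / 2) (fun t => gx t = 0 /\ gy t = 0)).
  { apply (filter_imp (fun t => 0 < t < s)); [|apply locally_open_interval; lra].
    intros t Ht. specialize (Hflat t Ht). unfold sqnorm in Hflat. split; nra. }
  assert (Hx : Derive gx (s / 2) = 0).
  { rewrite (Derive_ext_loc gx (fun _ => 0)); [apply Derive_const|].
    apply (filter_imp _ _ (fun t (Ht : _ /\ _) => proj1 Ht) Hloc). }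
  assert (Hy : Derive gy (s / 2) = 0).
  { rewrite (Derive_ext_loc gy (fun _ => 0)); [apply Derive_const|].
    apply (filter_imp _ _ (fun t (Ht : _ /\ _) => proj2 Ht) Hloc). }
  pose proof (unit_speed (s / 2) ltac:(lra)) as Hunit. rewrite Hx, Hy in Hunit. lra.
Qed.

Lemma sqnorm_pos s : 0 < s < L -> 0 < sqnorm s.
Proof.
  intros Hs.
  destruct (Rle_lt_or_eq_dec _ _ (sqnorm_nonneg s)) as [|Hzero]; [assumption|exfalso].
  apply (sqnorm_not_flat s); [lra|]. intros t Ht.
  assert (Hflat : kappa s * (Derive curvature t * sqnorm t) = 0).
  { apply (derive_eq_0_of_nondecreasing_flat (fun t => kappa s * defect t)
             (fun t => kappa s * (Derive curvature t * sqnorm t)) 0 s); [| | |exact Ht].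
    - intros x Hx. apply is_derive_scal, is_derive_defect. lra.
    - intros x Hx. apply kappa_defect_derive_nonneg; assumption.
    - assert (Hg : gx s = 0 /\ gy s = 0) by (unfold sqnorm in Hzero; split; nra).
      unfold defect, cross. rewrite <- Hzero, gx_0, gy_0, (proj1 Hg), (proj2 Hg).
      unfold sqnorm. rewrite gx_0, gy_0. ring. }
  rewrite Derive_curvature in Hflat by lra.
  pose proof (Rmult_pos_chain _ _ _ (kappa_same_sign s t Hs ltac:(lra))
                (kappa_kappa_s_pos t ltac:(lra))).
  rewrite <- Rmult_assoc in Hflat. apply Rmult_integral in Hflat as [|]; [lra|assumption].
Qed.

Lemma cos_sin_polar_unit t : 0 < t < L -> cos_polar t ^ 2 + sin_polar t ^ 2 = 1.
Proof.
  intros Ht. pose proof (sqnorm_pos t Ht) as Hpos.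
  pose proof (sqrt_lt_R0 _ Hpos) as Hr. pose proof (sqrt_sqrt _ (sqnorm_nonneg t)) as Hrr.
  unfold cos_polar, sin_polar.
  transitivity ((dot t ^ 2 + cross t ^ 2) / (sqrt (sqnorm t) * sqrt (sqnorm t))).
  - field. lra.
  - rewrite lagrange_identity, Hrr by lra. field. lra.
Qed.

Lemma is_derive_cos_polar t : 0 < t < L -> is_derive cos_polar t (- polar_rate t * sin_polar t).
Proof.
  intros Ht. pose proof (sqnorm_pos t Ht) as Hpos.
  pose proof (sqrt_lt_R0 _ Hpos) as Hr. pose proof (sqrt_sqrt _ (sqnorm_nonneg t)) as Hrr.
  pose proof (is_derive_dot t ltac:(lra)) as Hq. pose proof (is_derive_sqnorm t) as Hrho.
  unfold cos_polar. auto_derive; [repeat split; try (eexists; eassumption); lra|]. eta_Derive.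
  rewrite (is_derive_unique _ _ _ Hq), (is_derive_unique _ _ _ Hrho).
  pose proof (lagrange_identity t ltac:(lra)) as Hlag.
  set (r := sqrt (sqnorm t)) in *.
  (* The two sides differ by a multiple of |gamma|^2 - (gamma.T)^2 - (gamma x T)^2 = 0. *)
  transitivity (- polar_rate t * sin_polar t + (r * r - dot t ^ 2 - cross t ^ 2) / (r * r * r)).
  - unfold polar_rate, sin_polar. fold r. rewrite <- Hrr. field. lra.
  - rewrite Hrr, <- Hlag. field. lra.
Qed.

Lemma is_derive_sin_polar t : 0 < t < L -> is_derive sin_polar t (polar_rate t * cos_polar t).
Proof.
  intros Ht. pose proof (sqnorm_pos t Ht) as Hpos.
  pose proof (sqrt_lt_R0 _ Hpos) as Hr. pose proof (sqrt_sqrt _ (sqnorm_nonneg t)) as Hrr.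
  pose proof (is_derive_cross t ltac:(lra)) as Hp. pose proof (is_derive_sqnorm t) as Hrho.
  unfold sin_polar. auto_derive; [repeat split; try (eexists; eassumption); lra|]. eta_Derive.
  rewrite (is_derive_unique _ _ _ Hp), (is_derive_unique _ _ _ Hrho).
  unfold polar_rate, cos_polar. set (r := sqrt (sqnorm t)) in *. rewrite <- Hrr. field. lra.
Qed.

Lemma polar_relation_iff (theta t : R) : 0 < t < L ->
  (let r := sqrt (gx t ^ 2 + gy t ^ 2) in
   let X1 := gx t / r in
   let X2 := gy t / r in
   cos theta * X1 - sin theta * X2 = Derive gx t /\
   sin theta * X1 + cos theta * X2 = Derive gy t) <->
  cos theta = cos_polar t /\ sin theta = sin_polar t.
Proof.
  intros Ht. cbv zeta. change (gx t ^ 2 + gy t ^ 2) with (sqnorm t).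
  pose proof (sqnorm_pos t Ht) as Hpos.
  pose proof (sqrt_lt_R0 _ Hpos) as Hr. pose proof (sqrt_sqrt _ (sqnorm_nonneg t)) as Hrr.
  set (r := sqrt (sqnorm t)) in *.
  rewrite rotation_unit_iff.
  - unfold cos_polar, sin_polar, dot, cross. fold r. unfold Rdiv.
    split; intros [Hc Hs]; split; rewrite ?Hc, ?Hs; ring.
  - transitivity (sqnorm t / (r * r)); [unfold sqnorm; field; lra|].
    rewrite Hrr. field. lra.
Qed.

Lemma polar_rate_smooth : smooth_on_open 0 L polar_rate.
Proof.
  assert (Hsq : forall n, ex_derive_upto 0 L n sqnorm).
  { intros n. apply (ex_derive_upto_ext 0 L n (fun t => gx t * gx t + gy t * gy t)).
    - intros t _. unfold sqnorm. ring.
    - apply ex_derive_upto_plus; apply ex_derive_upto_mult;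
        apply (ex_derive_upto_of_smooth _ _ _ 0); assumption. }
  apply smooth_on_open_upto. intros n. unfold polar_rate, curvature, cross, Rdiv.
  apply ex_derive_upto_minus; [|apply ex_derive_upto_mult].
  - apply ex_derive_upto_minus; apply ex_derive_upto_mult;
      [apply (ex_derive_upto_of_smooth _ _ _ 1) | apply (ex_derive_upto_of_smooth _ _ _ 2)
      |apply (ex_derive_upto_of_smooth _ _ _ 1) | apply (ex_derive_upto_of_smooth _ _ _ 2)];
      assumption.
  - apply ex_derive_upto_minus; apply ex_derive_upto_mult;
      [apply (ex_derive_upto_of_smooth _ _ _ 0) | apply (ex_derive_upto_of_smooth _ _ _ 1)
      |apply (ex_derive_upto_of_smooth _ _ _ 0) | apply (ex_derive_upto_of_smooth _ _ _ 1)];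
      assumption.
  - apply (ex_derive_upto_inv 0 L sqnorm Hsq). intros t Ht. apply Rgt_not_eq, sqnorm_pos, Ht.
Qed.

Lemma kappa_polar_rate_pos s : 0 < s < L -> 0 < kappa s * polar_rate s.
Proof.
  intros Hs. pose proof (kappa_defect_nonneg s Hs) as Hdef.
  pose proof (sqnorm_pos s Hs) as Hpos. pose proof (kappa_same_sign s s Hs Hs) as Hk2.
  unfold polar_rate. unfold defect in Hdef. rewrite curvature_eq_kappa in * by lra.
  replace (kappa s * (kappa s - cross s / sqnorm s))
    with ((kappa s * (kappa s * sqnorm s - 2 * cross s) + kappa s * kappa s * sqnorm s)
          / (2 * sqnorm s)) by (field; lra).
  apply Rdiv_lt_0_compat; nra.
Qed.

Lemma curve_nonvanishing s : 0 < s < L -> (gx s, gy s) <> (0, 0).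
Proof.
  intros Hs Heq. injection Heq as Hx Hy. pose proof (sqnorm_pos s Hs) as Hpos.
  unfold sqnorm in Hpos. rewrite Hx, Hy in Hpos. lra.
Qed.

Lemma Derive_polar_angle omega : polar_tangential_angle L gx gy omega ->
  forall t, 0 < t < L -> Derive omega t = polar_rate t.
Proof.
  intros [Hsm Hom] t Ht.
  apply (Derive_angle 0 L cos_polar sin_polar polar_rate
           is_derive_cos_polar is_derive_sin_polar omega t Ht (Hsm 1%nat t Ht)).
  intros s Hs. apply polar_relation_iff, Hom; exact Hs.
Qed.

Lemma kappa_Derive_polar_angle_pos omega : polar_tangential_angle L gx gy omega ->
  forall s, 0 < s < L -> kappa s * Derive omega s > 0.
Proof.
  intros Hom s Hs. rewrite (Derive_polar_angle omega Hom s Hs).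
  apply kappa_polar_rate_pos, Hs.
Qed.

Hypothesis L_pos : 0 < L.

Lemma polar_angle_exists : exists omega, polar_tangential_angle L gx gy omega.
Proof.
  destruct (angle_lift_exists 0 L cos_polar sin_polar polar_rate cos_sin_polar_unit
              is_derive_cos_polar is_derive_sin_polar L_pos) as [omega [Homega Hcs]].
  - intros t Ht. apply (ex_derive_continuous polar_rate), (polar_rate_smooth 1%nat t Ht).
  - exists omega. split.
    + exact (smooth_on_open_of_is_derive 0 L omega _ Homega polar_rate_smooth).
    + intros t Ht. apply polar_relation_iff, Hcs; exact Ht.
Qed.

Lemma polar_angle_strictly_monotone omega : polar_tangential_angle L gx gy omega ->
  strictly_monotone_on_open 0 L omega.
Proof.
  intros Hom. assert (Hmid : 0 < L / 2 < L) by lra.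
  apply (strictly_monotone_of_derive_sign omega 0 L (kappa (L / 2))).
  - pose proof (kappa_same_sign _ _ Hmid Hmid) as Hk. intros H0. rewrite H0 in Hk. lra.
  - intros t Ht. exact (proj1 Hom 1%nat t Ht).
  - intros t Ht. apply (Rmult_pos_chain _ (kappa t)).
    + apply kappa_same_sign; assumption.
    + apply kappa_Derive_polar_angle_pos; assumption.
Qed.

End PlaneCurve.

Theorem corollary2p7 (L : R) (gx gy kappa : R -> R) :
  0 < L ->
  smooth gx -> smooth gy ->
  arclength_param L gx gy ->
  gx 0 = 0 -> gy 0 = 0 ->
  signed_curvature L gx gy kappa ->
  (forall s, 0 < s < L -> kappa s * Derive kappa s > 0) ->
  (forall s, 0 < s < L -> (gx s, gy s) <> (0, 0)) /\
  (exists omega, polar_tangential_angle L gx gy omega) /\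
  (forall omega, polar_tangential_angle L gx gy omega ->
     (forall s, 0 < s < L -> kappa s * Derive omega s > 0) /\
     strictly_monotone_on_open 0 L omega).
Proof.
  intros HL Sx Sy Harc Hx0 Hy0 Hcurv Hmono.
  split; [|split].
  - exact (curve_nonvanishing L gx gy kappa Sx Sy Harc Hcurv Hx0 Hy0 Hmono).
  - exact (polar_angle_exists L gx gy kappa Sx Sy Harc Hcurv Hx0 Hy0 Hmono HL).
  - intros omega Hom. split.
    + exact (kappa_Derive_polar_angle_pos L gx gy kappa Sx Sy Harc Hcurv Hx0 Hy0 Hmono
               omega Hom).
    + exact (polar_angle_strictly_monotone L gx gy kappa Sx Sy Harc Hcurv Hx0 Hy0 Hmono HL
               omega Hom).
Qed.
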